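(* A matrix $H_0\in\mathbb{C}^{3\times 3}$ is Hermitian, positive semidefinite and satisfies $H_0 H_0^T = 0_{3\times3}$ if and only if either $H_0=0$ or there exist $a,b,c\in\mathbb{R}$, not all zero, such that, with $x=\sqrt{a^2+b^2+c^2}$, $$H_0=\frac{1}{x}\begin{pmatrix} a^2+b^2 & bc+iax & -ac+ibx\\ bc-iax & a^2+c^2 & ab+icx\\ -ac-ibx & ab-icx & b^2+c^2\end{pmatrix}.$$
   Context: $^T$ denotes transpose (no conjugation). *)

(* The complex field C is modelled as R[i] (mathcomp-real-closed
   `complex`) over an arbitrary R : realType (a model of the real numbers). *)
From HB Require Import structures.
From mathcomp Require Import all_boot all_order all_algebra.
From mathcomp Require Import reals.
From mathcomp Require Export complex.
Set Implicit Arguments. Unset Strict Implicit. Unset Printing Implicit Defensive.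
Import Order.TTheory GRing.Theory Num.Theory.
Local Open Scope ring_scope.
Local Open Scope complex_scope.

Definition conjT {C : numClosedFieldType} (m n : nat) (M : 'M[C]_(m, n)) : 'M[C]_(n, m) :=
  (map_mx Num.conj M)^T.

Definition is_hermitian {C : numClosedFieldType} (n : nat) (M : 'M[C]_n) : Prop :=
  conjT M = M.

(* positive semidefinite: v^* M v >= 0 (i.e. real and nonnegative) for all v *)
Definition is_psd {C : numClosedFieldType} (n : nat) (M : 'M[C]_n) : Prop :=
  forall v : 'cV[C]_n, 0 <= (conjT v *m M *m v) 0 0.

(* the explicit 3x3 matrix of the statement (before the 1/x factor),
   with x = sqrt(a^2+b^2+c^2); entries written as Re +i* Im *)
Definition Hmat {R : rcfType} (a b c : R) : 'M[R[i]]_3 :=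
  let x := Num.sqrt (a ^+ 2 + b ^+ 2 + c ^+ 2) in
  let rows : seq (seq R[i]) :=
    [:: [:: (a ^+ 2 + b ^+ 2) +i* 0; (b * c) +i* (a * x); (- (a * c)) +i* (b * x)];
        [:: (b * c) +i* (- (a * x)); (a ^+ 2 + c ^+ 2) +i* 0; (a * b) +i* (c * x)];
        [:: (- (a * c)) +i* (- (b * x)); (a * b) +i* (- (c * x)); (b ^+ 2 + c ^+ 2) +i* 0]] in
  \matrix_(i < 3, j < 3) nth 0 (nth [::] rows i) j.

(* Write H = S + iA with S real symmetric and A real antisymmetric; the real
   part of H H^T = 0 reads S^2 = -A^2.  The 3x3 antisymmetric matrix A with
   entries a, b, c satisfies A^3 = -x^2 A, x^2 = a^2 + b^2 + c^2
   (Cayley-Hamilton), so S^4 = x^2 S^2, whence S^3 = x^2 S as S is symmetric.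
   Positivity of S then forces S^2 = x S, i.e. S = -A^2/x, which is the real
   part of the displayed matrix.  Conversely, for S = -A^2/x one gets
   S^2 = -A^2, SA = AS = xA, and H^2 = 2x H, so v^* H v = |Hv|^2 / 2x >= 0. *)

From HB Require Import structures.
From mathcomp Require Import all_boot all_order all_algebra.
From mathcomp Require Import reals complex ring.
Import Order.TTheory GRing.Theory Num.Theory.
Local Open Scope ring_scope.
Local Open Scope complex_scope.

Section RealMatrices.
Context {R : realDomainType}.

Definition psd_real {n} (S : 'M[R]_n) : Prop :=
  forall v : 'cV[R]_n, 0 <= (v^T *m S *m v) 0 0.

Lemma trmx_mul_self_diag {m n} (M : 'M[R]_(m, n)) j :
  (M^T *m M) j j = \sum_i M i j ^+ 2.
Proof. by rewrite mxE; apply: eq_bigr => i _; rewrite mxE. Qed.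

Lemma trmx_mul_self_diag_ge0 {m n} (M : 'M[R]_(m, n)) j : 0 <= (M^T *m M) j j.
Proof. by rewrite trmx_mul_self_diag sumr_ge0 // => i _; rewrite sqr_ge0. Qed.

Lemma trmx_mul_self_diag_eq0 {m n} (M : 'M[R]_(m, n)) :
  (forall j, (M^T *m M) j j = 0) -> M = 0.
Proof.
move=> M0; apply/matrixP => i j; rewrite mxE; apply/eqP.
have /eqP := M0 j; rewrite trmx_mul_self_diag psumr_eq0 => [/allP/(_ i)|k _].
  by rewrite mem_index_enum sqrf_eq0 => /(_ isT).
exact: sqr_ge0.
Qed.

Lemma trmx_mul_self_eq0 {m n} (M : 'M[R]_(m, n)) : M^T *m M = 0 -> M = 0.
Proof. by move=> M0; apply: trmx_mul_self_diag_eq0 => j; rewrite M0 mxE. Qed.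

Lemma sym_mul_sqr_eq0 {n m} [S : 'M[R]_n] [M : 'M[R]_(n, m)] :
  S^T = S -> S *m S *m M = 0 -> S *m M = 0.
Proof.
move=> symS SSM0; apply: trmx_mul_self_eq0.
by rewrite trmx_mul symS -mulmxA [S *m (S *m M)]mulmxA SSM0 mulmx0.
Qed.

Lemma psd_diag_ge0 {n m} (S : 'M[R]_n) (D : 'M[R]_(n, m)) j :
  psd_real S -> 0 <= (D^T *m S *m D) j j.
Proof.
move=> /(_ (col j D)).
by rewrite tr_col -row_mul colE mulmxA -colE -row_mul !mxE.
Qed.

Lemma psd_shift_ker {n m} [S : 'M[R]_n] [x : R] [D : 'M[R]_(n, m)] :
  psd_real S -> 0 < x -> (S + x%:M) *m D = 0 -> D = 0.
Proof.
move=> psdS x_gt0 SxD0; apply: trmx_mul_self_diag_eq0 => j.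
have : (D^T *m ((S + x%:M) *m D)) j j = 0 by rewrite SxD0 mulmx0 mxE.
rewrite mulmxDl mul_scalar_mx mulmxDr -scalemxAr mulmxA.
rewrite [_ j j]mxE [(_ *: _ : 'M_m) j j]mxE => /eqP.
rewrite paddr_eq0 ?psd_diag_ge0 ?mulr_ge0 ?(ltW x_gt0)
  ?trmx_mul_self_diag_ge0 //.
by rewrite mulf_eq0 (gt_eqF x_gt0) => /andP[_ /eqP].
Qed.

(* (S + x)(x S - S^2) = x^2 S - S^3, and S + x is injective. *)
Lemma psd_cube_sqr {n} [S : 'M[R]_n] [x : R] :
  psd_real S -> 0 < x -> S *m S *m S = x ^+ 2 *: S -> S *m S = x *: S.
Proof.
move=> psdS x_gt0 S3; apply/eqP; rewrite eq_sym -subr_eq0; apply/eqP.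
apply: (psd_shift_ker psdS x_gt0).
rewrite mulmxDl mul_scalar_mx mulmxBr -scalemxAr mulmxA S3.
rewrite scalerBr scalerA -expr2.
by rewrite addrC addrA subrK subrr.
Qed.

Lemma psd_root_opp_sqr {n} [S A : 'M[R]_n] [x : R] :
  S^T = S -> psd_real S -> 0 < x ->
  S *m S = - (A *m A) -> A *m A *m A = - x ^+ 2 *: A -> x *: S = - (A *m A).
Proof.
move=> symS psdS x_gt0 SS A3.
have S4 : S *m S *m (S *m S - (x ^+ 2)%:M) = 0.
  rewrite mulmxBr mul_mx_scalar SS mulNmx mulmxN opprK !mulmxA A3.
  by rewrite -scalemxAl scaleNr scalerN subrr.
have S3 : S *m S *m S = x ^+ 2 *: S.
  apply/eqP; rewrite -subr_eq0 -mul_mx_scalar -mulmxA -mulmxBr.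
  by rewrite (sym_mul_sqr_eq0 symS S4).
by rewrite -SS (psd_cube_sqr psdS x_gt0 S3).
Qed.

End RealMatrices.

Section ComplexMatrices.
Context {R : rcfType}.

Definition cmx {m n} (S A : 'M[R]_(m, n)) : 'M[R[i]]_(m, n) :=
  \matrix_(i, j) (S i j +i* A i j).

Lemma sum_complex (I : Type) (r : seq I) (P : pred I) (f g : I -> R) :
  \sum_(i <- r | P i) (f i +i* g i) =
  (\sum_(i <- r | P i) f i) +i* (\sum_(i <- r | P i) g i).
Proof. by elim/big_rec3: _ => // i x y z _ ->. Qed.

Lemma cmx_inj {m n} (S A S' A' : 'M[R]_(m, n)) :
  cmx S A = cmx S' A' -> S = S' /\ A = A'.
Proof.
move=> /matrixP eqSA; split; apply/matrixP => i j;
  by have := eqSA i j; rewrite !mxE => -[].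
Qed.

Lemma cmx0 {m n} : cmx 0 0 = 0 :> 'M_(m, n).
Proof. by apply/matrixP => i j; rewrite !mxE. Qed.

Lemma cmx_ReIm {m n} (M : 'M[R[i]]_(m, n)) :
  M = cmx (map_mx (@complex.Re R) M) (map_mx (@complex.Im R) M).
Proof. by apply/matrixP => i j; rewrite !mxE; case: (M i j). Qed.

Lemma tr_cmx {m n} (S A : 'M[R]_(m, n)) : (cmx S A)^T = cmx S^T A^T.
Proof. by apply/matrixP => i j; rewrite !mxE. Qed.

Lemma conjT_cmx {m n} (S A : 'M[R]_(m, n)) :
  conjT (cmx S A) = cmx S^T (- A^T).
Proof. by apply/matrixP => i j; rewrite !mxE. Qed.

Lemma scale_cmx {m n} (r : R) (S A : 'M[R]_(m, n)) :
  r%:C *: cmx S A = cmx (r *: S) (r *: A).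
Proof. by apply/matrixP => i j; rewrite !mxE; simpc. Qed.

Lemma mul_cmx {m n p} (S A : 'M[R]_(m, n)) (S' A' : 'M[R]_(n, p)) :
  cmx S A *m cmx S' A' = cmx (S *m S' - A *m A') (S *m A' + A *m S').
Proof.
apply/matrixP => i j; rewrite !mxE.
under eq_bigr do rewrite !mxE; simpc.
by rewrite sum_complex sumrB -big_split /=.
Qed.

Lemma hermitian_cmx {n} (S A : 'M[R]_n) :
  is_hermitian (cmx S A) <-> S^T = S /\ A^T = - A.
Proof.
rewrite /is_hermitian conjT_cmx; split => [/cmx_inj[-> skewA] | [-> ->]].
  by split=> //; rewrite -[in RHS]skewA opprK.
by rewrite opprK.
Qed.

Lemma psd_cmx_Re {n} (S A : 'M[R]_n) : is_psd (cmx S A) -> psd_real S.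
Proof.
move=> psdH v; have := psdH (cmx v 0).
rewrite conjT_cmx !mul_cmx !(trmx0, oppr0, mulmx0, mul0mx, subr0, addr0, add0r).
by rewrite mxE lecE => /andP[_].
Qed.

Lemma hermitian_isotropic_real_eq0 {n} [S : 'M[R]_n] :
  is_hermitian (cmx S 0) -> cmx S 0 *m (cmx S 0)^T = 0 -> S = 0.
Proof.
move=> /hermitian_cmx[symS _].
rewrite tr_cmx mul_cmx symS !(trmx0, mulmx0, mul0mx, subr0, addr0) -cmx0.
move=> /cmx_inj[SS _]; rewrite -[S]mulmx1.
by apply: sym_mul_sqr_eq0; rewrite // SS mul0mx.
Qed.

End ComplexMatrices.

Section HermitianMatrices.
Context {C : numClosedFieldType}.

Lemma conjT_mul {m n p} (A : 'M[C]_(m, n)) (B : 'M[C]_(n, p)) :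
  conjT (A *m B) = conjT B *m conjT A.
Proof. by rewrite /conjT map_mxM trmx_mul. Qed.

Lemma conjT_mul_self_ge0 {n} (u : 'cV[C]_n) : 0 <= (conjT u *m u) 0 0.
Proof. by rewrite mxE sumr_ge0 // => k _; rewrite !mxE mulrC mul_conjC_ge0. Qed.

(* v^* H v = |H v|^2 / r *)
Lemma hermitian_sqr_psd {n} (H : 'M[C]_n) (r : C) :
  is_hermitian H -> 0 < r -> H *m H = r *: H -> is_psd H.
Proof.
move=> hermH r_gt0 HH v.
have -> : conjT v *m H *m v = r^-1 *: (conjT (H *m v) *m (H *m v)).
  rewrite conjT_mul hermH mulmxA -[conjT v *m H *m H]mulmxA HH.
  by rewrite -scalemxAr -scalemxAl scalerA mulVf ?gt_eqF // scale1r.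
by rewrite mxE mulr_ge0 ?invr_ge0 ?(ltW r_gt0) ?conjT_mul_self_ge0.
Qed.

End HermitianMatrices.

Section IsotropicMatrix.
Context {R : rcfType} {n : nat}.
Variables (x : R) (A : 'M[R]_n).

Definition isotropic_mx : 'M[R[i]]_n := cmx (- x^-1 *: (A *m A)) A.

Hypotheses (x_gt0 : 0 < x) (A3 : A *m A *m A = - x ^+ 2 *: A).

Lemma hermitian_psd_isotropic_cmx (S : 'M[R]_n) :
  is_hermitian (cmx S A) -> is_psd (cmx S A) -> cmx S A *m (cmx S A)^T = 0 ->
  cmx S A = isotropic_mx.
Proof.
move=> /hermitian_cmx[symS skewA] /psd_cmx_Re psdS.
rewrite tr_cmx mul_cmx symS skewA mulmxN opprK -cmx0 => /cmx_inj[SSAA _].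
have SS : S *m S = - (A *m A) by apply/eqP; rewrite -addr_eq0 SSAA.
have xS := psd_root_opp_sqr symS psdS x_gt0 SS A3.
rewrite /isotropic_mx -(opprK (A *m A)) -xS scalerN scaleNr opprK scalerA.
by rewrite mulVf ?gt_eqF // scale1r.
Qed.

Let S := - x^-1 *: (A *m A).

Let xS : x *: S = - (A *m A).
Proof. by rewrite /S scalerA mulrN mulfV ?gt_eqF // scaleN1r. Qed.

Let SA : S *m A = x *: A.
Proof.
rewrite /S -scalemxAl A3 scalerA mulrN mulNr opprK expr2 mulrA mulVf ?gt_eqF //.
by rewrite mul1r.
Qed.

Let AS : A *m S = x *: A.
Proof. by rewrite /S -scalemxAr mulmxA -SA -scalemxAl. Qed.

Let SS : S *m S = - (A *m A).
Proof.
rewrite {1}/S -scalemxAl -mulmxA AS -scalemxAr scalerA mulNr mulVf ?gt_eqF //.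
by rewrite scaleN1r.
Qed.

Lemma isotropic_mx_spec : A^T = - A ->
  is_hermitian isotropic_mx /\ is_psd isotropic_mx /\
  isotropic_mx *m isotropic_mx^T = 0.
Proof.
move=> skewA.
have symS : S^T = S.
  by rewrite /S linearZ /= trmx_mul skewA mulmxN mulNmx opprK.
have hermH : is_hermitian isotropic_mx by apply/hermitian_cmx.
split=> //; split.
  apply: (@hermitian_sqr_psd _ _ _ (x + x)%:C) => //.
    by rewrite ltcR addr_gt0.
  rewrite mul_cmx scale_cmx SA AS SS !scalerDl xS.
  by rewrite -(addrC (- (A *m A))).
rewrite /isotropic_mx -/S tr_cmx mul_cmx symS skewA !mulmxN opprK SS SA AS.
by rewrite !addNr cmx0.
Qed.

End IsotropicMatrix.

Section Skew3.
Context {R : numDomainType}.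

Definition skew3 (a b c : R) : 'M[R]_3 :=
  \matrix_(i, j)
    nth 0 (nth [::] [:: [:: 0; a; b]; [:: - a; 0; c]; [:: - b; - c; 0]] i) j.

Lemma skew3_cube (a b c : R) :
  skew3 a b c *m skew3 a b c *m skew3 a b c =
  - (a ^+ 2 + b ^+ 2 + c ^+ 2) *: skew3 a b c.
Proof.
apply/matrixP => i j; rewrite !mxE !big_ord_recr !big_ord0 /= !mxE.
rewrite !big_ord_recr !big_ord0 /= !mxE.
by case: i => [[|[|[|?]]] ?]; case: j => [[|[|[|?]]] ?] //=; ring.
Qed.

Lemma tr_skew3 (a b c : R) : (skew3 a b c)^T = - skew3 a b c.
Proof.
apply/matrixP => i j; rewrite !mxE.
by case: i => [[|[|[|?]]] ?]; case: j => [[|[|[|?]]] ?] //=;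
  rewrite ?opprK ?oppr0.
Qed.

Lemma skew3_0 : skew3 0 0 0 = 0.
Proof.
apply/matrixP => i j; rewrite !mxE.
by case: i => [[|[|[|?]]] ?]; case: j => [[|[|[|?]]] ?] //=; rewrite oppr0.
Qed.

Lemma antisym_skew3 [A : 'M[R]_3] : A^T = - A -> exists a b c, A = skew3 a b c.
Proof.
move=> /matrixP skewA; exists (A 0 1), (A 0 2), (A 1 2).
have {}skewA i j : A j i = - A i j by have := skewA i j; rewrite !mxE.
have diag0 i : A i i = 0 by apply/eqP; rewrite -eqNr -skewA.
apply/matrixP => i j; rewrite !mxE.
case: i => [[|[|[|i]]] Hi]; case: j => [[|[|[|j]]] Hj] //=;
  by rewrite -?skewA -?(diag0 (Ordinal Hi)); congr (A _ _); apply: val_inj.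
Qed.

End Skew3.

Lemma sqrt_sum3_sqr_gt0 {R : rcfType} [a b c : R] :
  ~ (a = 0 /\ b = 0 /\ c = 0) -> 0 < Num.sqrt (a ^+ 2 + b ^+ 2 + c ^+ 2).
Proof.
move=> abc; rewrite sqrtr_gt0 lt_def !addr_ge0 ?sqr_ge0 // andbT.
apply/negP; rewrite !paddr_eq0 ?addr_ge0 ?sqr_ge0 // !sqrf_eq0.
by move=> /andP[/andP[/eqP a0 /eqP b0] /eqP c0]; apply: abc.
Qed.

Lemma Hmat_cmx {R : rcfType} (a b c : R) :
  Hmat a b c = cmx (- (skew3 a b c *m skew3 a b c))
                   (Num.sqrt (a ^+ 2 + b ^+ 2 + c ^+ 2) *: skew3 a b c).
Proof.
apply/matrixP => i j; rewrite !mxE !big_ord_recr !big_ord0 /= !mxE.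
by case: i => [[|[|[|?]]] ?]; case: j => [[|[|[|?]]] ?] //=;
  congr (_ +i* _); ring.
Qed.

Lemma skew3_cube_sqrt {R : rcfType} (a b c : R) :
  skew3 a b c *m skew3 a b c *m skew3 a b c =
  - Num.sqrt (a ^+ 2 + b ^+ 2 + c ^+ 2) ^+ 2 *: skew3 a b c.
Proof. by rewrite sqr_sqrtr ?addr_ge0 ?sqr_ge0 // skew3_cube. Qed.

Lemma scale_Hmat {R : rcfType} (a b c : R) : ~ (a = 0 /\ b = 0 /\ c = 0) ->
  ((Num.sqrt (a ^+ 2 + b ^+ 2 + c ^+ 2))%:C)^-1 *: Hmat a b c =
  isotropic_mx (Num.sqrt (a ^+ 2 + b ^+ 2 + c ^+ 2)) (skew3 a b c).
Proof.
move=> /sqrt_sum3_sqr_gt0 x_gt0.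
rewrite Hmat_cmx -fmorphV scale_cmx /isotropic_mx scaleNr scalerN scalerA.
by rewrite mulVf ?gt_eqF // scale1r.
Qed.

Theorem mainTheorem10 (R : realType) (H0 : 'M[R[i]]_3) :
  (is_hermitian H0 /\ is_psd H0 /\ H0 *m H0^T = 0) <->
  (H0 = 0 \/
   exists a b c : R, ~ (a = 0 /\ b = 0 /\ c = 0) /\
     H0 = ((Num.sqrt (a ^+ 2 + b ^+ 2 + c ^+ 2))%:C)^-1 *: Hmat a b c).
Proof.
split=> [[] | [-> | [a [b [c [abc ->]]]]]]; last 2 first.
- split; first by rewrite -cmx0; apply/hermitian_cmx; rewrite trmx0 oppr0.
  by split=> [v|]; rewrite ?mulmx0 ?mul0mx ?mxE.
- rewrite scale_Hmat //; apply: isotropic_mx_spec (tr_skew3 a b c).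
    exact: sqrt_sum3_sqr_gt0.
  exact: skew3_cube_sqrt.
rewrite (cmx_ReIm H0); set S := map_mx _ H0; set A := map_mx _ H0.
move=> hermH [psdH isoH].
have [a [b [c A_skew3]]] := antisym_skew3 (proj2 ((hermitian_cmx S A).1 hermH)).
rewrite {}A_skew3 in hermH psdH isoH *.
have [/and3P[/eqP a0 /eqP b0 /eqP c0] | abc] :=
  boolP [&& a == 0, b == 0 & c == 0].
  left; rewrite a0 b0 c0 skew3_0 in hermH isoH *.
  by rewrite (hermitian_isotropic_real_eq0 hermH isoH) cmx0.
have {}abc : ~ (a = 0 /\ b = 0 /\ c = 0).
  by move=> [a0 [b0 c0]]; rewrite a0 b0 c0 !eqxx in abc.
right; exists a, b, c; split=> //; rewrite scale_Hmat //.
exact: hermitian_psd_isotropic_cmx _ _ (sqrt_sum3_sqr_gt0 abc)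
  (skew3_cube_sqrt a b c) _ hermH psdH isoH.
Qed.
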